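(* Let $(\Omega,\rho)$ be a metric space, $\beta\in(0,1]$, $\emptyset\ne A\subset\Omega$ and $f:\Omega\to[0,1]$ such that $\sup_{u\ne v\in A}\frac{|f(u)-f(v)|}{\rho(u,v)^\beta}<\infty$ and $\mathrm{diam}(A)<\infty$. Then the $\beta$-PMSE $F_A$ of $f$ from $A$ is well defined, takes values in $[0,1]$, and satisfies $\Lambda^\beta_{F_A}(x)\le\Lambda^\beta_f(x)$ for every $x\in\Omega$.
   Context: $\Lambda_g^\beta(x):=\sup_{y\in\Omega\setminus\{x\}}\frac{|g(x)-g(y)|}{\rho(x,y)^\beta}$. For $x\in\Omega$ and $u,v\in A$ (excluding the case $u=v=x$), set $R_x(u,v):=\frac{f(v)-f(u)}{\rho(x,v)^\beta+\rho(x,u)^\beta}$, $F_x(u,v):=f(u)+R_x(u,v)\rho(x,u)^\beta$, $R^*_x:=\sup_{u,v\in A}R_x(u,v)$, and for $0<\epsilon<R_x^*$, $W_x(\epsilon):=\{(u,v)\in A\times A: R_x(u,v)>R_x^*-\epsilon\}$, $\Phi_x(\epsilon):=\{F_x(u,v):(u,v)\in W_x(\epsilon)\}$. The $\beta$-pointwise minimal slope extension ($\beta$-PMSE) is $F_A(x):=\lim_{\epsilon\to0^+}\Phi_x(\epsilon)$, meaning the unique real number $r$ with $\sup_{\phi\in\Phi_x(\epsilon)}|\phi-r|\to0$ as $\epsilon\to0^+$ (''well defined'' means this limit exists). In the degenerate case where $f$ is constant on $A$, $F_A$ is defined to be that constant. *)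

From HB Require Import structures.
From mathcomp Require Import all_boot all_order all_algebra.
From mathcomp Require Import all_classical all_reals all_analysis.
Set Implicit Arguments. Unset Strict Implicit. Unset Printing Implicit Defensive.
Import Order.TTheory GRing.Theory Num.Theory.
Local Open Scope classical_set_scope.
Local Open Scope ring_scope.

Section PMSE.
Variables (R : realType) (T : Type).

Definition is_metric (rho : T -> T -> R) : Prop :=
  [/\ (forall x y, 0 <= rho x y),
      (forall x y, rho x y = 0 <-> x = y),
      (forall x y, rho x y = rho y x) &
      (forall x y z, rho x z <= rho x y + rho y z)].

Definition Lambda (rho : T -> T -> R) (beta : R) (g : T -> R) (x : T) : \bar R :=
  ereal_sup [set ((`|g x - g y| / (rho x y `^ beta))%:E) | y in ~` [set x]].

Definition holder_seminorm (rho : T -> T -> R) (beta : R) (f : T -> R) (A : set T)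
  : \bar R :=
  ereal_sup [set ((`|f uv.1 - f uv.2| / (rho uv.1 uv.2 `^ beta))%:E)
            | uv in [set uv : T * T | A uv.1 /\ A uv.2 /\ uv.1 <> uv.2]].

Definition diam (rho : T -> T -> R) (A : set T) : \bar R :=
  ereal_sup [set ((rho uv.1 uv.2)%:E) | uv in [set uv : T * T | A uv.1 /\ A uv.2]].

Definition adm_pair (A : set T) (x : T) : set (T * T) :=
  [set uv | A uv.1 /\ A uv.2 /\ ~ (uv.1 = x /\ uv.2 = x)].

Definition Rx (rho : T -> T -> R) (beta : R) (f : T -> R) (x u v : T) : R :=
  (f v - f u) / (rho x v `^ beta + rho x u `^ beta).

Definition Fx (rho : T -> T -> R) (beta : R) (f : T -> R) (x u v : T) : R :=
  f u + Rx rho beta f x u v * rho x u `^ beta.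

Definition Rstar (rho : T -> T -> R) (beta : R) (f : T -> R) (A : set T) (x : T)
  : \bar R :=
  ereal_sup [set ((Rx rho beta f x uv.1 uv.2)%:E) | uv in adm_pair A x].

Definition Wx rho beta f A x (eps : R) : set (T * T) :=
  [set uv | adm_pair A x uv /\
     (Rstar rho beta f A x - eps%:E < (Rx rho beta f x uv.1 uv.2)%:E)%E].

Definition Phix rho beta f A x (eps : R) : set R :=
  [set Fx rho beta f x uv.1 uv.2 | uv in Wx rho beta f A x eps].

(* lim_{eps -> 0+} Phi_x(eps) = r, i.e. sup_{phi in Phi_x(eps)} |phi - r| -> 0
   as eps -> 0+ (eps ranging over 0 < eps < R*_x) *)
Definition Phi_lim rho beta f A x (r : R) : Prop :=
  forall delta : R, 0 < delta -> exists eta : R, 0 < eta /\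
    forall eps : R, 0 < eps -> eps < eta -> (eps%:E < Rstar rho beta f A x)%E ->
      forall phi, Phix rho beta f A x eps phi -> `|phi - r| <= delta.

Definition constant_on (f : T -> R) (A : set T) : Prop :=
  forall u v, A u -> A v -> f u = f v.

Definition is_pmse rho beta f A x (r : R) : Prop :=
  (constant_on f A /\ exists a, A a /\ r = f a) \/
  (~ constant_on f A /\ Phi_lim rho beta f A x r).

(* the beta-PMSE F_A, as a function (meaningful where it is well defined) *)
Definition pmse rho beta f A (x : T) : R :=
  xget 0 [set r | is_pmse rho beta f A x r].

End PMSE.

From HB Require Import structures.
From mathcomp Require Import all_boot all_order all_algebra.
From mathcomp Require Import all_classical all_reals all_analysis.
From mathcomp Require Import ring lra.
Set Implicit Arguments. Unset Strict Implicit. Unset Printing Implicit Defensive.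
Import Order.TTheory GRing.Theory Num.Theory.
Local Open Scope classical_set_scope.
Local Open Scope ring_scope.

(* Write d_x(a) = rho(x,a)^beta; for 0 < beta <= 1 it is again a metric, by
   subadditivity of t |-> t^beta.  When f is not constant on A, the optimal
   slope s = R*_x is a positive real (Hoelder bound), and every admissible
   pair gives f v - s d_x(v) <= f u + s d_x(u).  Hence the value
   c_x = inf_{a in A} (f a + s d_x(a)) is pinched between the two cones of
   slope s from the points of A, and pairs with R_x(u,v) close to s make both
   cones nearly tight and put F_x(u,v) close to c_x; so Phi_x(eps) -> c_x and
   F_A(x) = c_x.  This pinching is abstracted as [envelope]: envelope values
   lie in [0,1], and two of them (at x and y) differ by at most
   l * d_x(y) whenever the slope at x is at most l.  Since R*_x <= Lambda_f(x),
   this gives Lambda_{F_A}(x) <= Lambda_f(x). *)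

Section PowerFacts.
Variable R : realType.

Lemma powR_ge_self (r b : R) : 0 <= r <= 1 -> 0 < b -> b <= 1 -> r <= r `^ b.
Proof.
move=> /andP[r0 r1] b0 b1.
have [->|rn0] := eqVneq r 0; first by rewrite powR0 ?gt_eqF.
by apply: ger1_powR => //; rewrite r1 andbT lt_neqAle eq_sym rn0.
Qed.

(* t |-> t^b is subadditive for 0 < b <= 1: this makes rho^beta a metric. *)
Lemma powR_subadditive (p q b : R) : 0 <= p -> 0 <= q -> 0 < b -> b <= 1 ->
  (p + q) `^ b <= p `^ b + q `^ b.
Proof.
move=> p0 q0 b0 b1.
have [s0|sn0] := eqVneq (p + q) 0.
  have [-> ->] : p = 0 /\ q = 0 by lra.
  by rewrite addr0 powR0 ?gt_eqF // addr0.
have sp : 0 < p + q by rewrite lt_neqAle eq_sym sn0 addr_ge0.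
have scale (r : R) : 0 <= r -> r `^ b = (p + q) `^ b * (r / (p + q)) `^ b.
  by move=> r0; rewrite -powRM ?divr_ge0 ?(ltW sp) // mulrC divfK ?gt_eqF.
have frac_le (r : R) : 0 <= r <= p + q -> r / (p + q) <= (r / (p + q)) `^ b.
  move=> /andP[r0 rs]; apply: powR_ge_self => //.
  by rewrite divr_ge0 ?(ltW sp) //= ler_pdivrMr // mul1r.
have h1 := frac_le p; have h2 := frac_le q.
have e1 : p / (p + q) + q / (p + q) = 1 by rewrite -mulrDl divff ?gt_eqF.
rewrite (scale p) // (scale q) // -mulrDr -{1}[(p + q) `^ b]mulr1.
rewrite ler_wpM2l ?powR_ge0 //.
have : 0 <= p <= p + q by apply/andP; split; lra.
have : 0 <= q <= p + q by apply/andP; split; lra.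
move=> /h2 ? /h1 ?; lra.
Qed.

Lemma ereal_lt_pinfty_bound (x : \bar R) :
  (x < +oo)%E -> exists2 M : R, 0 <= M & (x <= M%:E)%E.
Proof.
case: x => [x _| |] //; last by exists 0 => //; rewrite leNye.
by exists (Num.max x 0); rewrite ?le_max ?lexx ?orbT // lee_fin le_max lexx.
Qed.

End PowerFacts.

Section Envelope.
Variables (R : realType) (T : Type).

(* c is the value at a point of the minimal-slope extension of f from A when
   the distances to that point are d and the slope is s: the two cones
   f a - s d a <= c <= f a + s d a hold on A and are approximately tight. *)
Definition envelope (A : set T) (f d : T -> R) (s c : R) : Prop :=
  [/\ forall a, A a -> f a - s * d a <= c <= f a + s * d a,
      forall e, 0 < e -> exists2 u, A u & f u + s * d u <= c + e &
      forall e, 0 < e -> exists2 v, A v & c - e <= f v - s * d v].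

Lemma envelope_opp (A : set T) (f d : T -> R) (s c : R) :
  envelope A f d s c -> envelope A (fun a => - f a) d s (- c).
Proof.
case=> cone up low; split.
- by move=> a /cone /andP[h1 h2]; apply/andP; split; lra.
- by move=> e /low [v Av h]; exists v => //; lra.
- by move=> e /up [u Au h]; exists u => //; lra.
Qed.

Lemma envelope_in01 (A : set T) (f d : T -> R) (s c : R) :
  (forall a, 0 <= f a <= 1) -> (forall a, 0 <= d a) -> 0 <= s ->
  envelope A f d s c -> 0 <= c <= 1.
Proof.
move=> f01 d0 s0 [_ up low]; apply/andP; split.
- apply/ler_addgt0Pr => e /up [u _ h].
  have := f01 u; have := mulr_ge0 s0 (d0 u); move=> h1 /andP[h2 _]; lra.
- apply/ler_addgt0Pr => e /low [v _ h].
  have := f01 v; have := mulr_ge0 s0 (d0 v); move=> h1 /andP[_ h2]; lra.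
Qed.

Lemma envelope_le (A : set T) (f d d' : T -> R) (s t l dl c e : R) :
  0 <= t -> 0 <= s -> s <= l -> 0 <= dl ->
  (forall a, A a -> [/\ 0 <= d a, 0 <= d' a, d a <= d' a + dl & d' a <= d a + dl]) ->
  envelope A f d s c -> envelope A f d' t e -> e - c <= l * dl.
Proof.
move=> t0 s0 sl dl0 close [cone_c up_c _] [cone_e _ low_e].
rewrite leNgt; apply/negP => gap.
have [g gE] : exists g, g = e - c - l * dl by eexists.
have g2 : 0 < g / 2 by rewrite divr_gt0 //; lra.
have half : g / 2 + g / 2 = g by rewrite -splitr.
have sdl : s * dl <= l * dl by rewrite ler_wpM2r.
have t_lt_s : t < s.
  have [v Av hv] := low_e _ g2.
  have /andP[hc _] := cone_c v Av.
  have [_ d'v0 dv _] := close v Av.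
  rewrite ltNge; apply/negP => st.
  have : s * d v <= s * d' v + s * dl by rewrite -mulrDr ler_wpM2l.
  have : s * d' v <= t * d' v by rewrite ler_wpM2r.
  lra.
have [u Au hu] := up_c _ g2.
have /andP[_ he] := cone_e u Au.
have [du0 _ _ d'u] := close u Au.
have : t * d' u <= t * d u + t * dl by rewrite -mulrDr ler_wpM2l.
have : t * d u <= s * d u by rewrite ler_wpM2r // ltW.
have : t * dl <= s * dl by rewrite ler_wpM2r // ltW.
lra.
Qed.

Lemma envelope_lipschitz (A : set T) (f d d' : T -> R) (s t l dl c e : R) :
  0 <= t -> 0 <= s -> s <= l -> 0 <= dl ->
  (forall a, A a -> [/\ 0 <= d a, 0 <= d' a, d a <= d' a + dl & d' a <= d a + dl]) ->
  envelope A f d s c -> envelope A f d' t e -> `|c - e| <= l * dl.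
Proof.
move=> t0 s0 sl dl0 close env_c env_e.
have h1 := envelope_le t0 s0 sl dl0 close env_c env_e.
have h2 := envelope_le t0 s0 sl dl0 close (envelope_opp env_c) (envelope_opp env_e).
by rewrite ler_norml; apply/andP; split; lra.
Qed.

End Envelope.

Section PMSE.
Variables (R : realType) (T : Type) (rho : T -> T -> R) (beta : R).
Variables (A : set T) (f : T -> R).
Hypotheses (rho_metric : is_metric rho) (beta_gt0 : 0 < beta) (beta_le1 : beta <= 1).

Local Notation d x a := (rho x a `^ beta).

Lemma rho_gt0 u v : u <> v -> 0 < rho u v.
Proof.
case: rho_metric => r0 req _ _ uv.
by rewrite lt_neqAle r0 andbT eq_sym; apply/eqP => /req.
Qed.

Lemma dist_gt0 x a : a <> x -> 0 < d x a.
Proof. by move=> ax; apply/powR_gt0/rho_gt0 => xa; apply: ax. Qed.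

Lemma dist_self x : d x x = 0.
Proof. by case: rho_metric => _ req _ _; rewrite (proj2 (req x x)) // powR0 ?gt_eqF. Qed.

Lemma dist_sym x y : d x y = d y x.
Proof. by case: rho_metric => _ _ rsym _; rewrite rsym. Qed.

Lemma dist_triangle x y a : d x a <= d x y + d y a.
Proof.
case: rho_metric => r0 _ _ rtri.
apply: le_trans (powR_subadditive (r0 x y) (r0 y a) beta_gt0 beta_le1).
by apply: ge0_ler_powR; rewrite ?nnegrE ?addr_ge0 ?(ltW beta_gt0).
Qed.

Lemma adm_den_gt0 x u v : ~ (u = x /\ v = x) -> 0 < d x v + d x u.
Proof.
move=> nz; have [ux|ux] := pselect (u = x).
  by rewrite ltr_pwDl ?powR_ge0 // dist_gt0 // => vx; apply: nz.
by rewrite ltr_pwDr ?powR_ge0 // dist_gt0.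
Qed.

Lemma Lambda_ge0 (g : T -> R) x y : y <> x -> (0 <= Lambda rho beta g x)%E.
Proof.
move=> yx; apply: le_trans (_ : ((`|g x - g y| / d x y)%:E <= _)%E).
  by rewrite lee_fin divr_ge0 ?powR_ge0.
by apply: ereal_sup_ubound; exists y.
Qed.

Lemma Lambda_fin_bound (g : T -> R) x l :
  Lambda rho beta g x = l%:E -> forall a, `|g x - g a| <= l * d x a.
Proof.
move=> EL a; have [->|ax] := pselect (a = x).
  by rewrite subrr normr0 dist_self mulr0.
have : ((`|g x - g a| / d x a)%:E <= l%:E)%E.
  by rewrite -EL; apply: ereal_sup_ubound; exists a.
by rewrite lee_fin ler_pdivrMr // dist_gt0.
Qed.

Lemma Rstar_le_Lambda x : (Rstar rho beta f A x <= Lambda rho beta f x)%E.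
Proof.
apply: ge_ereal_sup => _ [[u v] [_ [_ nz]] <-] /=.
have [w wx] : exists w, w <> x.
  by have [ux|ux] := pselect (u = x); [exists v => vx; apply: nz | exists u].
have := Lambda_ge0 f wx.
case EL: (Lambda rho beta f x) => [l| |] // _; last by rewrite leey.
have bound := Lambda_fin_bound EL.
rewrite lee_fin /Rx ler_pdivrMr ?adm_den_gt0 // mulrDr.
have := bound u; have := bound v.
have := ler_norm (f x - f u); rewrite (distrC (f x) (f v)).
have := ler_norm (f v - f x); lra.
Qed.

Lemma pmse_eq x (c : R) :
  (forall r, is_pmse rho beta f A x r <-> r = c) -> pmse rho beta f A x = c.
Proof. by move=> E; apply: xget_unique; [apply/E | move=> r /E]. Qed.

Lemma is_pmse_const x a0 r : constant_on f A -> A a0 ->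
  is_pmse rho beta f A x r <-> r = f a0.
Proof.
move=> cst Aa0; split.
- by case=> [[_ [a [Aa ->]]]|[nc _]]; [exact: cst | contradiction].
- by move=> ->; left; split => //; exists a0.
Qed.

Section NonConstant.
Hypotheses (f01 : forall x, 0 <= f x <= 1) (f_nonconst : ~ constant_on f A).
Hypotheses (holder_fin : (holder_seminorm rho beta f A < +oo)%E)
           (diam_fin : (diam rho A < +oo)%E).

Lemma nonconst_pair : exists u0 v0, [/\ A u0, A v0 & f u0 < f v0].
Proof.
apply: contra_notP f_nonconst => none u v Au Av.
apply/eqP; rewrite eq_le; apply/andP; split; rewrite leNgt; apply/negP => h.
- by apply: none; exists v, u.
- by apply: none; exists u, v.
Qed.

Lemma Rx_bounded x : exists H, forall u v,
  adm_pair A x (u, v) -> Rx rho beta f x u v <= H.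
Proof.
have [M M0 hM] := ereal_lt_pinfty_bound holder_fin.
exists M => u v [/= Au [Av nz]].
rewrite /Rx ler_pdivrMr ?adm_den_gt0 //.
have [<-|uv] := pselect (u = v).
  by rewrite subrr mulr_ge0 // addr_ge0 ?powR_ge0.
have : ((`|f u - f v| / d u v)%:E <= M%:E)%E.
  by apply: le_trans hM; apply: ereal_sup_ubound; exists (u, v).
have duv : 0 < d u v by apply: dist_gt0 => vu; apply: uv.
rewrite lee_fin ler_pdivrMr // => hf.
have : M * d u v <= M * (d x v + d x u).
  by rewrite ler_wpM2l // addrC (dist_sym x u) dist_triangle.
have := ler_norm (f v - f u); rewrite distrC; lra.
Qed.

Lemma Rstar_fin x : exists2 s : R, Rstar rho beta f A x = s%:E & 0 < s.
Proof.
have [H hH] := Rx_bounded x.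
have [u0 [v0 [Au0 Av0 fuv]]] := nonconst_pair.
have nz : ~ (u0 = x /\ v0 = x) by case=> eu ev; move: fuv; rewrite eu ev ltxx.
have lb : ((Rx rho beta f x u0 v0)%:E <= Rstar rho beta f A x)%E.
  by apply: ereal_sup_ubound; exists (u0, v0).
have ub : (Rstar rho beta f A x <= H%:E)%E.
  by apply: ge_ereal_sup => _ [[u v] adm <-]; rewrite lee_fin; apply: hH.
have R0 : 0 < Rx rho beta f x u0 v0 by rewrite divr_gt0 ?subr_gt0 ?adm_den_gt0.
move: lb ub; case: (Rstar rho beta f A x) => [s| |] //.
by rewrite lee_fin => lb _; exists s => //; apply: lt_le_trans lb.
Qed.

Definition slope x : R := fine (Rstar rho beta f A x).

Lemma RstarE x : Rstar rho beta f A x = (slope x)%:E.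
Proof. by have [s Es _] := Rstar_fin x; rewrite /slope Es. Qed.

Lemma slope_gt0 x : 0 < slope x.
Proof. by have [s Es s0] := Rstar_fin x; rewrite /slope Es. Qed.

Lemma Rx_le_slope x u v : adm_pair A x (u, v) -> Rx rho beta f x u v <= slope x.
Proof. by move=> adm; rewrite -lee_fin -RstarE; apply: ereal_sup_ubound; exists (u, v). Qed.

Lemma near_optimal_exists x eps : 0 < eps ->
  exists u v, adm_pair A x (u, v) /\ slope x - eps < Rx rho beta f x u v.
Proof.
move=> eps0; have : ((slope x - eps)%:E < Rstar rho beta f A x)%E.
  by rewrite RstarE lte_fin; lra.
by case/ereal_sup_gt => _ [[u v] adm <-]; rewrite lte_fin; exists u, v.
Qed.

Definition center x : R := inf [set f a + slope x * d x a | a in A].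

Lemma center_cone x a : A a ->
  f a - slope x * d x a <= center x <= f a + slope x * d x a.
Proof.
have s0 := slope_gt0 x.
have cross u v : A u -> A v -> f v - slope x * d x v <= f u + slope x * d x u.
  move=> Au Av; have [[-> ->]|nz] := pselect (u = x /\ v = x).
    by rewrite dist_self mulr0 subr0 addr0.
  have := Rx_le_slope (conj Au (conj Av nz)).
  by rewrite /Rx ler_pdivrMr ?adm_den_gt0 //; lra.
move=> Aa; apply/andP; split.
- apply: lb_le_inf => [|_ [u Au <-]]; last exact: cross.
  by exists (f a + slope x * d x a), a.
- apply: ge_inf; last by exists a.
  exists 0 => _ [u _ <-]; have := f01 u.
  by have := mulr_ge0 (ltW s0) (powR_ge0 (rho x u) beta); move=> h /andP[h1 _]; lra.
Qed.

Lemma dist_bounded x : exists2 C : R, 0 < C & forall a, A a -> d x a <= C.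
Proof.
have [u0 [_ [Au0 _ _]]] := nonconst_pair.
have [M M0 hM] := ereal_lt_pinfty_bound diam_fin.
case: rho_metric => r0 _ _ rtri.
have C1 : 1 <= 1 + (rho x u0 + M) by rewrite lerDl addr_ge0.
exists (1 + (rho x u0 + M)); first by apply: lt_le_trans C1.
move=> a Aa; apply: le_trans (ler1_powR C1 beta_le1).
apply: ge0_ler_powR; rewrite ?nnegrE ?(ltW beta_gt0) ?r0 ?(le_trans ler01 C1) //.
have : ((rho u0 a)%:E <= M%:E)%E.
  by apply: le_trans hM; apply: ereal_sup_ubound; exists (u0, a).
by rewrite lee_fin => h; have := rtri x u0 a; lra.
Qed.

Lemma near_optimal x C eps u v : (forall a, A a -> d x a <= C) -> 0 <= eps ->
  adm_pair A x (u, v) -> slope x - eps < Rx rho beta f x u v ->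
  [/\ `|Fx rho beta f x u v - center x| <= eps * C,
      f u + slope x * d x u <= center x + 2 * eps * C &
      center x - 2 * eps * C <= f v - slope x * d x v].
Proof.
move=> dC eps0 adm close.
have [Au [Av nz]] : A u /\ A v /\ ~ (u = x /\ v = x) := adm.
have hR := Rx_le_slope adm.
have /andP[_ cu] := center_cone x Au; have /andP[cv _] := center_cone x Av.
set s := slope x in close hR cu cv *; set r := Rx rho beta f x u v in close hR *.
have ide : r * d x v + r * d x u = f v - f u.
  by rewrite -mulrDr /r /Rx divfK // gt_eqF // adm_den_gt0.
have gap a : A a -> 0 <= s * d x a - r * d x a <= eps * C.
  move=> Aa; rewrite -mulrBl mulr_ge0 ?subr_ge0 ?powR_ge0 //=.
  apply: le_trans (_ : eps * d x a <= _); first by rewrite ler_wpM2r ?powR_ge0 //; lra.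
  by rewrite ler_wpM2l ?dC.
have /andP[gu1 gu2] := gap u Au; have /andP[gv1 gv2] := gap v Av.
rewrite /Fx -/r; split; try lra.
by rewrite ler_norml; apply/andP; split; lra.
Qed.

Lemma center_envelope x : envelope A f (fun a => d x a) (slope x) (center x).
Proof.
have [C C0 dC] := dist_bounded x.
have C2 : 0 < 2 * C by rewrite mulr_gt0.
have scale e : 2 * (e / (2 * C)) * C = e by field; rewrite gt_eqF.
have tight e : 0 < e -> exists u v, adm_pair A x (u, v) /\
    [/\ f u + slope x * d x u <= center x + e & center x - e <= f v - slope x * d x v].
  move=> e0; have e' : 0 < e / (2 * C) by rewrite divr_gt0.
  have [u [v [adm close]]] := near_optimal_exists x e'.
  have [_ hu hv] := near_optimal dC (ltW e') adm close.
  by exists u, v; rewrite -(scale e).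
split; first exact: center_cone.
- by move=> e /tight [u [v [[Au _] [hu _]]]]; exists u.
- by move=> e /tight [u [v [[_ [Av _]] [_ hv]]]]; exists v.
Qed.

Lemma center_Phi_lim x : Phi_lim rho beta f A x (center x).
Proof.
have [C C0 dC] := dist_bounded x.
move=> del del0; exists (del / C); split; first by rewrite divr_gt0.
move=> eps e0 eeta _ _ [[u v] [adm close] <-].
move: close; rewrite RstarE -EFinD lte_fin => close.
have [h _ _] := near_optimal dC (ltW e0) adm close.
by apply: le_trans h _; rewrite -ler_pdivlMr // ltW.
Qed.

(* Phi_x(eps) is nonempty for small eps, so its limit is unique. *)
Lemma Phi_lim_unique x r1 r2 :
  Phi_lim rho beta f A x r1 -> Phi_lim rho beta f A x r2 -> r1 = r2.
Proof.
move=> h1 h2; apply/eqP; rewrite -subr_eq0 -normr_le0.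
apply/ler_addgt0Pr => del del0; rewrite add0r.
have del2 : 0 < del / 2 by rewrite divr_gt0.
have [eta1 [eta1_0 k1]] := h1 _ del2; have [eta2 [eta2_0 k2]] := h2 _ del2.
pose eps := Num.min (Num.min eta1 eta2) (slope x) / 2.
have m0 : 0 < Num.min (Num.min eta1 eta2) (slope x).
  by rewrite !lt_min eta1_0 eta2_0 slope_gt0.
have [m1 m2 m3] : [/\ Num.min (Num.min eta1 eta2) (slope x) <= eta1,
    Num.min (Num.min eta1 eta2) (slope x) <= eta2 &
    Num.min (Num.min eta1 eta2) (slope x) <= slope x].
  by rewrite !ge_min !lexx !orbT.
have eps0 : 0 < eps by rewrite divr_gt0.
have epsR : (eps%:E < Rstar rho beta f A x)%E by rewrite RstarE lte_fin /eps; lra.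
have [u [v [adm close]]] := near_optimal_exists x eps0.
have W : Phix rho beta f A x eps (Fx rho beta f x u v).
  by exists (u, v) => //; split => //; rewrite RstarE -EFinD lte_fin.
have := k1 _ eps0 _ epsR _ W; have := k2 _ eps0 _ epsR _ W.
rewrite /eps => /(_ ltac:(lra)) near2 /(_ ltac:(lra)) near1.
have := ler_normD (r1 - Fx rho beta f x u v) (Fx rho beta f x u v - r2).
rewrite distrC in near1; rewrite addrA subrK.
by have := splitr del; lra.
Qed.

Lemma is_pmse_center x r : is_pmse rho beta f A x r <-> r = center x.
Proof.
split; last by move=> ->; right; split => //; exact: center_Phi_lim.
case=> [[cst _]|[_ hr]]; first by contradiction.
exact: Phi_lim_unique hr (center_Phi_lim x).
Qed.

Lemma center_in01 x : 0 <= center x <= 1.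
Proof.
apply: envelope_in01 f01 _ (ltW (slope_gt0 x)) (center_envelope x).
by move=> a; exact: powR_ge0.
Qed.

Lemma center_Lambda x y : y <> x ->
  ((`|center x - center y| / d x y)%:E <= Lambda rho beta f x)%E.
Proof.
move=> yx; have := Lambda_ge0 f yx.
case EL: (Lambda rho beta f x) => [l| |] // _; last by rewrite leey.
have sl : slope x <= l by rewrite -lee_fin -RstarE -EL Rstar_le_Lambda.
rewrite lee_fin ler_pdivrMr ?dist_gt0 //.
apply: (envelope_lipschitz _ (ltW (slope_gt0 x)) sl (powR_ge0 _ _) _
  (center_envelope x) (center_envelope y)); first exact/ltW/slope_gt0.
move=> a _; split; rewrite ?powR_ge0 //.
- by rewrite addrC; exact: dist_triangle.
- by rewrite addrC (dist_sym x y); exact: dist_triangle.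
Qed.

End NonConstant.
End PMSE.

Theorem theorem8 (R : realType) (T : Type) (rho : T -> T -> R) (beta : R)
    (A : set T) (f : T -> R) :
  is_metric rho -> 0 < beta -> beta <= 1 ->
  A !=set0 ->
  (forall x, 0 <= f x <= 1) ->
  (holder_seminorm rho beta f A < +oo)%E ->
  (diam rho A < +oo)%E ->
  [/\ (forall x, exists! r, is_pmse rho beta f A x r),
      (forall x, 0 <= pmse rho beta f A x <= 1) &
      (forall x, (Lambda rho beta (pmse rho beta f A) x <= Lambda rho beta f x)%E)].
Proof.
move=> metric beta_gt0 beta_le1 [a0 Aa0] f01 holder_fin diam_fin.
have [cst|ncst] := pselect (constant_on f A).
- have E x r := is_pmse_const rho beta x r cst Aa0.
  have pmE x : pmse rho beta f A x = f a0 := pmse_eq (E x).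
  split=> x.
  + by exists (f a0); split=> [|r /(E x) ->]; [apply/(E x) | ].
  + by rewrite pmE.
  + apply: ge_ereal_sup => _ [y yx <-].
    by rewrite !pmE subrr normr0 mul0r; exact: (Lambda_ge0 rho beta f yx).
- have E := is_pmse_center metric beta_gt0 beta_le1 f01 ncst holder_fin diam_fin.
  have pmE x : pmse rho beta f A x = center rho beta A f x := pmse_eq (E x).
  split=> x.
  + by exists (center rho beta A f x); split=> [|r /(E x) ->]; [apply/(E x) | ].
  + by rewrite pmE; exact: center_in01.
  + apply: ge_ereal_sup => _ [y yx <-].
    by rewrite !pmE; exact: center_Lambda.
Qed.
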